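(* For all $x,y\in\mathcal{X}$ and $N\in\mathbb{N}^+$, $$\tilde\alpha_N(x,y)\le\alpha(x,y)\,\mathbb{E}_{Q_{x,N}}\left[W_{x,N}^{-1}\right].$$
   Context: Let $(\mathcal{X},\mathcal{B}(\mathcal{X}))$ be a measurable space, $\pi$ a probability distribution on it with density $\pi(x)$ with respect to a reference measure, and $q$ a Markov proposal kernel. For each $x\in\mathcal{X}$, $N\in\mathbb{N}^+$, $Q_{x,N}$ is a probability distribution on $[0,\infty)$ such that $W_{x,N}\sim Q_{x,N}$ satisfies $W_{x,N}>0$ a.s. and $\mathbb{E}[W_{x,N}]=1$. Define $\alpha(x,y)=\min\{1,\frac{\pi(dy)q(y,dx)}{\pi(dx)q(x,dy)}\}$ and $\tilde\alpha_N(x,y)=\mathbb{E}[\min\{1,\frac{\pi(dy)q(y,dx)}{\pi(dx)q(x,dy)}\frac{W_{y,N}}{W_{x,N}}\}]$ with $W_{x,N}\sim Q_{x,N}$ and $W_{y,N}\sim Q_{y,N}$ independent. *)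

From HB Require Import structures.
From mathcomp Require Import all_boot all_order all_algebra.
From mathcomp Require Import all_classical all_reals all_analysis.
Set Implicit Arguments. Unset Strict Implicit. Unset Printing Implicit Defensive.
Import Order.TTheory GRing.Theory Num.Theory.
Local Open Scope ring_scope.
Local Open Scope classical_set_scope.
Local Open Scope ereal_scope.

(* [ratio x y] stands for the Radon-Nikodym ratio
   pi(dy) q(y,dx) / (pi(dx) q(x,dy)) (a nonnegative real). *)

Definition mh_alpha {X : Type} {R : realType} (ratio : X -> X -> R) (x y : X) : R :=
  Num.min 1%R (ratio x y).

(* alpha~_N(x,y) = E[min{1, ratio x y * W_y / W_x}] with W_x ~ Q x N, W_y ~ Q y N
   independent: expectation under the product measure (Q x N) \x (Q y N) on R * R,
   first component W_x, second component W_y. *)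
Definition pm_alpha {X : Type} {R : realType} (ratio : X -> X -> R)
  (Q : X -> nat -> probability R R) (N : nat) (x y : X) : \bar R :=
  \int[(Q x N \x Q y N)]_(w in [set: R * R])
     (Num.min 1%R (ratio x y * w.2 / w.1))%:E.

Definition inv_moment {X : Type} {R : realType}
  (Q : X -> nat -> probability R R) (N : nat) (x : X) : \bar R :=
  \int[Q x N]_(w in [set: R]) (w^-1)%:E.

From HB Require Import structures.
From mathcomp Require Import all_boot all_order all_algebra.
From mathcomp Require Import all_classical all_reals all_analysis.
From mathcomp Require Import lra.
Import Order.TTheory GRing.Theory Num.Theory.
Import measurable_realfun.
Set Implicit Arguments.
Unset Strict Implicit.
Unset Printing Implicit Defensive.
Local Open Scope ring_scope.
Local Open Scope classical_set_scope.
Local Open Scope ereal_scope.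

(* Write r for the ratio.  If r <= 1 then min(1, r W_y / W_x) <= r W_y / W_x,
   and independence with E[W_y] = 1 gives the bound r E[1/W_x].  If r > 1 the
   integrand is at most 1, and 1 <= E[1/W_x] by Jensen's inequality, here in
   the pointwise form w + 1/w >= 2 for w > 0.  The integrands are only
   nonnegative off the null set where a weight is nonpositive, so integrals
   are compared through positive parts. *)

Lemma measurable_inv (R : realType) : measurable_fun [set: R] (@GRing.inv R).
Proof.
rewrite (_ : GRing.inv = fun x : R => if x == 0%R then 0%R else (x^-1)%R); last first.
  by apply/funext => x; case: eqP => // ->; rewrite invr0.
apply: measurable_fun_if => //.
- apply: (measurable_fun_bool true).
  rewrite (_ : _ @^-1` _ = [set 0%R]) ?setTI//.
  by apply/seteqP; split => [_ /eqP ->//|_ -> /=]; rewrite eqxx.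
- rewrite (_ : _ `&` _ = ~` [set 0%R]); last first.
    by apply/seteqP; split => [x [_ /= /eqP]//|x /= /eqP /negbTE ->].
  apply: open_continuous_measurable_fun; first exact/closed_openC/closed_eq.
  by move=> x; rewrite inE => /eqP x0; exact: inv_continuous.
Qed.

Lemma measurable_scaled_ratio (R : realType) (r : R) :
  measurable_fun [set: R * R] (fun w : R * R => r * w.2 / w.1)%R.
Proof.
apply: measurable_funM; last exact: measurableT_comp (@measurable_inv R) measurable_fst.
by apply: measurable_funM => //; exact: measurable_snd.
Qed.

Lemma measurable_nonpos (R : realType) : measurable [set w : R | (w <= 0)%R].
Proof. by rewrite -set_itvNyc; exact: measurable_itv. Qed.

Section integral_comparisons.
Context d (T : measurableType d) (R : realType).
Variable mu : {measure set T -> \bar R}.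

Lemma integral_le_funepos (f : T -> \bar R) :
  \int[mu]_(x in [set: T]) f x <= \int[mu]_(x in [set: T]) f^\+ x.
Proof.
rewrite integralE -[leRHS]sube0; apply: leeB => //.
by apply: integral_ge0 => x _; exact: funeneg_ge0.
Qed.

Lemma integral_min1_le_mass (f : T -> R) : measurable_fun [set: T] f ->
  \int[mu]_(x in [set: T]) (Num.min 1%R (f x))%:E <= mu [set: T].
Proof.
move=> mf; apply: le_trans (integral_le_funepos _) _.
rewrite -[leRHS]mul1e -integral_cst //; apply: ge0_le_integral => //.
- apply/measurable_funepos/measurable_EFinP.
  exact: measurable_minr.
- move=> x _; rewrite funeposE -EFin_max lee_fin ge_max ler01 andbT.
  by rewrite ge_min lexx.
Qed.

End integral_comparisons.

Section positive_support.
Context (R : realType) (mu : {measure set R -> \bar R}).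
Hypothesis mu_nonpos : mu [set w : R | (w <= 0)%R] = 0.

Lemma integral_maxr0 (h : R -> R) : measurable_fun [set: R] h ->
  (forall w : R, (0 < w)%R -> (0 <= h w)%R) ->
  \int[mu]_(w in [set: R]) (h w)%:E = \int[mu]_(w in [set: R]) (Num.max (h w) 0%R)%:E.
Proof.
move=> mh h0.
have mhn : measurable_fun [set: R] (fun w => (h w)%:E)^\-.
  by apply: measurable_funeneg; exact/measurable_EFinP.
rewrite integralE.
rewrite [X in _ - X](ge0_negligible_integral (@measurable_nonpos R) _ mhn _ mu_nonpos) //.
rewrite [X in _ - X]integral0_eq ?sube0; last first.
  move=> w [_ /= /negP]; rewrite -ltNge => w0.
  rewrite funenegE -EFinN -EFin_max; congr EFin.
  by apply/max_idPr; rewrite oppr_le0 h0.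
by apply: eq_integral => w _; rewrite funeposE EFin_max.
Qed.

Lemma integral_id_maxr0 :
  \int[mu]_(w in [set: R]) w%:E = \int[mu]_(w in [set: R]) (Num.max w 0%R)%:E.
Proof. by apply: (@integral_maxr0 id) => // w /ltW. Qed.

Lemma integral_inv_maxr0 :
  \int[mu]_(w in [set: R]) (w^-1)%:E =
  \int[mu]_(w in [set: R]) (Num.max w^-1 0%R)%:E.
Proof.
apply: integral_maxr0; first exact: measurable_inv.
by move=> w w0; rewrite invr_ge0 ltW.
Qed.

End positive_support.

Lemma integral_inv_ge1 (R : realType) (P : probability R R) :
  P [set w : R | (w <= 0)%R] = 0 -> \int[P]_(w in [set: R]) w%:E = 1 ->
  1 <= \int[P]_(w in [set: R]) (w^-1)%:E.
Proof.
move=> P_nonpos P_mean.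
have maxr0_ge0 (a : R) : 0 <= (Num.max a 0%R)%:E by rewrite lee_fin le_max lexx orbT.
have minv : measurable_fun [set: R] (fun w : R => (Num.max w^-1 0%R)%:E).
  by apply/measurable_EFinP/measurable_maxr => //; exact: measurable_inv.
have mid : measurable_fun [set: R] (fun w : R => (Num.max w 0%R)%:E).
  exact/measurable_EFinP/measurable_maxr.
have two_le : 2%:E <= \int[P]_(w in [set: R]) (Num.max w^-1 0%R)%:E + 1.
  rewrite -[X in _ + X]P_mean integral_id_maxr0 // -ge0_integralD //.
  rewrite -[2%:E]mule1 -(probability_setT P) -integral_cst //.
  apply: ae_ge0_le_integral => //; first by move=> w _; rewrite lee_fin.
  - by move=> w _; rewrite adde_ge0.
  - exact: emeasurable_funD.
  exists [set w : R | (w <= 0)%R]; split; [exact: measurable_nonpos|by []|].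
  move=> w /= le2; apply: contrapT => /negP; rewrite -ltNge => w0.
  have wV0 : (0 < w^-1)%R by rewrite invr_gt0.
  apply: le2 => _; rewrite -EFinD lee_fin (max_idPl (ltW w0)) (max_idPl (ltW wV0)).
  rewrite -(ler_pM2r w0) [leRHS]mulrDl mulVf ?gt_eqF //.
  have := sqr_ge0 (w - 1)%R; nra.
move: two_le; rewrite -integral_inv_maxr0 //.
case: (\int[P]_(w in [set: R]) (w^-1)%:E) => [s|_|] //; last exact: leey.
by rewrite -EFinD !lee_fin; lra.
Qed.

Lemma product_measureXU0 d1 d2 (T1 : measurableType d1) (T2 : measurableType d2)
  (R : realType) (m1 : {measure set T1 -> \bar R})
  (m2 : {sigma_finite_measure set T2 -> \bar R}) (A : set T1) (B : set T2) :
  measurable A -> measurable B -> m1 A = 0 -> m2 B = 0 ->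
  (m1 \x m2) (A `*` [set: T2] `|` [set: T1] `*` B) = 0.
Proof.
move=> mA mB m1A m2B; apply/eqP; rewrite eq_le measure_ge0 andbT.
have A0 : (m1 \x m2) (A `*` [set: T2]) <= 0.
  by rewrite product_measure1E // m1A mul0e.
have B0 : (m1 \x m2) ([set: T1] `*` B) <= 0.
  by rewrite product_measure1E // m2B mule0.
apply: le_trans (measureU2 _ _ _) _; try exact: measurableX.
by rewrite -[leRHS](adde0 0); apply: leeD.
Qed.

Section product_integrals.
Context d1 d2 (T1 : measurableType d1) (T2 : measurableType d2) (R : realType).
Variable m1 : {sigma_finite_measure set T1 -> \bar R}.
Variable m2 : {sigma_finite_measure set T2 -> \bar R}.

Lemma ge0_integral_product_mul (f : T1 -> R) (g : T2 -> R) :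
  measurable_fun [set: T1] f -> measurable_fun [set: T2] g ->
  (forall x, 0 <= f x)%R -> (forall y, 0 <= g y)%R ->
  \int[m1 \x m2]_(z in [set: T1 * T2]) (f z.1 * g z.2)%:E =
  \int[m1]_(x in [set: T1]) (f x)%:E * \int[m2]_(y in [set: T2]) (g y)%:E.
Proof.
move=> mf mg f0 g0.
rewrite fubini_tonelli1 /fubini_F /=; last 2 first.
- apply/measurable_EFinP/measurable_funM.
    exact: measurableT_comp mf measurable_fst.
  exact: measurableT_comp mg measurable_snd.
- by move=> z; rewrite lee_fin mulr_ge0.
transitivity (\int[m1]_(x in [set: T1]) ((f x)%:E * \int[m2]_(y in [set: T2]) (g y)%:E)).
  apply: eq_integral => x _; under eq_integral do rewrite EFinM.
  rewrite ge0_integralZl_EFin //; last exact/measurable_EFinP.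
  by move=> y _; rewrite lee_fin.
rewrite ge0_integralZr //; first exact/measurable_EFinP.
  by move=> x _; rewrite lee_fin.
by apply: integral_ge0 => y _; rewrite lee_fin.
Qed.

End product_integrals.

Lemma product_probability_setT d1 d2 (T1 : measurableType d1)
  (T2 : measurableType d2) (R : realType) (P1 : probability T1 R)
  (P2 : probability T2 R) : (P1 \x P2) [set: T1 * T2] = 1.
Proof.
rewrite -setXTT product_measure1E // -[RHS]mul1e.
by congr (_ * _); exact: probability_setT.
Qed.

Lemma integral_min1_ratio_le (R : realType)
  (m1 m2 : {sigma_finite_measure set R -> \bar R}) (r : R) : (0 <= r)%R ->
  m1 [set w : R | (w <= 0)%R] = 0 -> m2 [set w : R | (w <= 0)%R] = 0 ->
  \int[m1 \x m2]_(w in [set: R * R]) (Num.min 1%R (r * w.2 / w.1))%:E <=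
  r%:E * \int[m2]_(w in [set: R]) w%:E * \int[m1]_(w in [set: R]) (w^-1)%:E.
Proof.
move=> r0 m1_nonpos m2_nonpos.
have maxr0_ge0 (a : R) : (0 <= Num.max a 0)%R by rewrite le_max lexx orbT.
have mmaxV : measurable_fun [set: R] (fun w : R => Num.max w^-1 0)%R.
  by apply: measurable_maxr => //; exact: measurable_inv.
have mmax : measurable_fun [set: R] (fun w : R => Num.max w 0)%R.
  exact: measurable_maxr.
pose g (w : R * R) := (Num.max w.1^-1 0 * (r * Num.max w.2 0))%R.
apply: le_trans (integral_le_funepos _ _) _.
apply: (@le_trans _ _ (\int[m1 \x m2]_(w in [set: R * R]) (g w)%:E)).
  apply: ae_ge0_le_integral => //.
  - apply/measurable_funepos/measurable_EFinP/measurable_minr => //.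
    exact: measurable_scaled_ratio.
  - by move=> w _; rewrite lee_fin mulr_ge0 ?mulr_ge0.
  - apply/measurable_EFinP/measurable_funM; first exact: measurableT_comp mmaxV measurable_fst.
    by apply: measurable_funM => //; exact: measurableT_comp mmax measurable_snd.
  exists ([set w : R | (w <= 0)%R] `*` [set: R] `|`
          [set: R] `*` [set w : R | (w <= 0)%R]).
  split; last first.
  - move=> [a b] /= gt; have [a0|a0] := leP a 0%R; first by left.
    have [b0|b0] := leP b 0%R; first by right.
    have aV0 : (0 < a^-1)%R by rewrite invr_gt0.
    exfalso; apply: gt => _; rewrite funeposE -EFin_max lee_fin /g /=.
    rewrite (max_idPl (ltW b0)) (max_idPl (ltW aV0)).
    rewrite [leRHS]mulrC ge_max ge_min lexx orbT /=.
    exact: divr_ge0 (mulr_ge0 r0 (ltW b0)) (ltW a0).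
  - exact: product_measureXU0 (@measurable_nonpos R) (@measurable_nonpos R) _ _.
  - by apply: measurableU; apply: measurableX => //; exact: measurable_nonpos.
have mrmax : measurable_fun [set: R] (fun w : R => r * Num.max w 0)%R.
  exact: measurable_funM.
rewrite (ge0_integral_product_mul m1 m2 mmaxV mrmax); last 2 first.
- by move=> w; rewrite maxr0_ge0.
- by move=> w; rewrite mulr_ge0.
rewrite -integral_inv_maxr0 // muleC.
under eq_integral do rewrite EFinM.
rewrite ge0_integralZl_EFin // -?integral_id_maxr0 //; last exact/measurable_EFinP.
by move=> w _; rewrite lee_fin.
Qed.

Theorem lemma3p5 (d : measure_display) (X : measurableType d) (R : realType)
  (ratio : X -> X -> R) (ratio_ge0 : forall x y : X, (0 <= ratio x y)%R)
  (Q : X -> nat -> probability R R)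
  (Q_pos : forall (x : X) (N : nat), (0 < N)%N -> Q x N [set w : R | (w <= 0)%R] = 0)
  (Q_mean : forall (x : X) (N : nat), (0 < N)%N ->
     \int[Q x N]_(w in [set: R]) w%:E = 1)
  (x y : X) (N : nat) (hN : (0 < N)%N) :
  pm_alpha ratio Q N x y <= (mh_alpha ratio x y)%:E * inv_moment Q N x.
Proof.
have r0 := ratio_ge0 x y.
have [r_le1|r_gt1] := leP (ratio x y) 1%R.
- have -> : mh_alpha ratio x y = ratio x y by exact/min_idPr.
  apply: le_trans (integral_min1_ratio_le r0 (Q_pos x N hN) (Q_pos y N hN)) _.
  by rewrite Q_mean // mule1.
- have -> : mh_alpha ratio x y = 1%R by exact/min_idPl/ltW.
  rewrite mul1e; apply: le_trans (integral_min1_le_mass _ (measurable_scaled_ratio _)) _.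
  apply: le_trans (integral_inv_ge1 (Q_pos x N hN) (Q_mean x N hN)).
  by rewrite le_eqVlt (introT eqP (product_probability_setT _ _)).
Qed.
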